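(* Let $G$ be a graph of order $n\geq 2$. Then $q_{2}(G)=n-2$ if and only if the complement $\overline{G}$ has a balanced bipartite component or has at least two bipartite components.
   Context: All graphs are finite and simple. For a graph $G$ with adjacency matrix $A$ and diagonal degree matrix $D$, the signless Laplacian is $Q(G)=A+D$; its eigenvalues are denoted $q_1(G)\geq q_2(G)\geq\cdots\geq q_n(G)$. $\overline{G}$ denotes the complement of $G$. A connected bipartite graph is called balanced if its two vertex classes have equal size, and unbalanced otherwise; an isolated vertex is considered to be an (unbalanced) bipartite component with one empty vertex class. A bipartite component of a graph means a connected component that is bipartite (including isolated vertices). *)

From HB Require Import structures.
From mathcomp Require Import all_boot all_order all_algebra all_field.
Set Implicit Arguments. Unset Strict Implicit. Unset Printing Implicit Defensive.
Import Order.TTheory GRing.Theory Num.Theory.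

Definition simple_graph (n : nat) (e : rel 'I_n) : Prop :=
  irreflexive e /\ symmetric e.

Definition compl_graph (n : nat) (e : rel 'I_n) : rel 'I_n :=
  fun i j => (i != j) && ~~ e i j.

Definition degree (n : nat) (e : rel 'I_n) (i : 'I_n) : nat :=
  #|[set j | e i j]|.

Local Open Scope ring_scope.

Definition adj_mx (n : nat) (e : rel 'I_n) : 'M[algC]_n :=
  \matrix_(i, j) (e i j)%:R.

Definition deg_mx (n : nat) (e : rel 'I_n) : 'M[algC]_n :=
  \matrix_(i, j) ((i == j)%:R * (degree e i)%:R).

Definition signless_laplacian (n : nat) (e : rel 'I_n) : 'M[algC]_n :=
  adj_mx e + deg_mx e.

Definition eigenvalues (n : nat) (M : 'M[algC]_n) : seq algC :=
  sval (closed_field_poly_normal (char_poly M)).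

(* Q-spectrum sorted in nonincreasing order q_1 >= q_2 >= ... >= q_n
   (all eigenvalues of the real symmetric matrix Q are real, so this
   relation is total on them). *)
Definition Qspectrum (n : nat) (e : rel 'I_n) : seq algC :=
  sort (fun x y : algC => y <= x) (eigenvalues (signless_laplacian e)).

(* q_k(G), 1-indexed *)
Definition qeig (n : nat) (e : rel 'I_n) (k : nat) : algC :=
  nth 0 (Qspectrum e) k.-1.

Local Close Scope ring_scope.

Definition component (n : nat) (e : rel 'I_n) (v : 'I_n) : {set 'I_n} :=
  [set w | connect e v w].

Definition bipartite_on (n : nat) (e : rel 'I_n) (C : {set 'I_n})
  (c : 'I_n -> bool) : Prop :=
  forall x y, x \in C -> y \in C -> e x y -> c x != c y.

Definition bipartite_component (n : nat) (e : rel 'I_n) (v : 'I_n) : Prop :=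
  exists c, bipartite_on e (component e v) c.

(* balanced: a proper 2-colouring with equal colour classes (for a connected
   bipartite graph the bipartition is unique up to swapping) *)
Definition balanced_bipartite_component (n : nat) (e : rel 'I_n) (v : 'I_n)
  : Prop :=
  exists c, bipartite_on e (component e v) c /\
    #|[set w in component e v | c w]| = #|[set w in component e v | ~~ c w]|.

Definition has_two_bipartite_components (n : nat) (e : rel 'I_n) : Prop :=
  exists u v, ~~ connect e u v /\ bipartite_component e u /\
              bipartite_component e v.

(* Q(G) + Q(co-G) = J + (n - 2) I, so on a vector u with zero entry
   sum  u Q(G) u^* = (n - 2)|u|^2 - u Q(co-G) u^*, and u Q(co-G) u^* >= 0
   vanishes exactly when u is alternating on co-G (u_i + u_j = 0 along
   every edge).  Spectrally, q_2 = c iff two eigenvalues are >= c and not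
   two of them are > c.  Every plane spanned by two eigenvectors contains a
   nonzero sum-zero vector, which excludes two eigenvalues > n - 2 and shows
   that two eigenvalues >= n - 2 produce a nonzero alternating sum-zero
   vector; conversely such a vector w, together with the indicator of a
   bipartite component of co-G, spans a plane on which the Rayleigh quotient
   is >= n - 2 (min-max).  Finally, nonzero alternating sum-zero vectors
   exist exactly when co-G has a balanced bipartite component or two
   bipartite components. *)

From HB Require Import structures.
From mathcomp Require Import all_boot all_order all_algebra all_field.
From mathcomp Require Import sesquilinear spectral ring.
Set Implicit Arguments. Unset Strict Implicit. Unset Printing Implicit Defensive.
Import Order.TTheory GRing.Theory Num.Theory.
Local Open Scope ring_scope.
Local Open Scope sesquilinear_scope.

Definition qform n (A : 'M[algC]_n) (u : 'rV[algC]_n) : algC :=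
  (u *m A *m u ^t*) 0 0.
Definition sqnorm n (u : 'rV[algC]_n) : algC := (u *m u ^t*) 0 0.
Definition sumv n (u : 'rV[algC]_n) : algC := \sum_i u 0 i.

Lemma sqnormE n (u : 'rV[algC]_n) : sqnorm u = \sum_i u 0 i * (u 0 i)^*.
Proof. by rewrite /sqnorm mxE; apply: eq_bigr => i _; rewrite !mxE. Qed.

Lemma qformD n (A B : 'M[algC]_n) u : qform (A + B) u = qform A u + qform B u.
Proof. by rewrite /qform mulmxDr mulmxDl mxE. Qed.

Lemma qformB n (A B : 'M[algC]_n) u : qform (A - B) u = qform A u - qform B u.
Proof. by rewrite /qform mulmxBr mulmxBl !mxE. Qed.

Lemma qform_scalar n (a : algC) (u : 'rV[algC]_n) : qform a%:M u = a * sqnorm u.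
Proof. by rewrite /qform mul_mx_scalar -scalemxAl mxE. Qed.

Lemma qform_const1 n (u : 'rV[algC]_n) : qform (const_mx 1) u = sumv u * (sumv u)^*.
Proof.
rewrite /qform /sumv mxE rmorph_sum mulr_sumr; apply: eq_bigr => k _.
rewrite !mxE; congr (_ * _); apply: eq_bigr => i _.
by rewrite !mxE mulr1.
Qed.

Lemma qformE n (A : 'M[algC]_n) u :
  qform A u = \sum_i \sum_j u 0 i * A i j * (u 0 j)^*.
Proof.
rewrite /qform mxE [RHS]exchange_big; apply: eq_bigr => j _.
by rewrite !mxE mulr_suml.
Qed.

Lemma sumvZD n a b (x y : 'rV[algC]_n) :
  sumv (a *: x + b *: y) = a * sumv x + b * sumv y.
Proof.
by rewrite /sumv !mulr_sumr -big_split; apply: eq_bigr => i _; rewrite !mxE.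
Qed.

Lemma row_neq0P (R : zmodType) n (u : 'rV[R]_n) : u != 0 -> exists k, u 0 k != 0.
Proof.
move=> u0; apply/existsP; apply: contraNT u0; rewrite negb_exists => /forallP uk.
by apply/eqP/rowP => k; have := uk k; rewrite negbK !mxE => /eqP.
Qed.

Lemma psumr_gt0 (R : numDomainType) (I : finType) (F : I -> R) k :
  (forall i, 0 <= F i) -> 0 < F k -> 0 < \sum_i F i.
Proof.
move=> F_ge0 Fk; rewrite lt_def sumr_ge0 // andbT psumr_neq0 //.
by apply/hasP; exists k; rewrite ?mem_index_enum.
Qed.

Lemma nontrivial_kernel2 (R : comNzRingType) (x y : R) :
  exists ab : R * R, ((ab.1 != 0) || (ab.2 != 0)) /\ ab.1 * x + ab.2 * y = 0.
Proof.
have [x0|x0] := eqVneq x 0.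
  by exists (1, 0); rewrite /= x0 oner_eq0 mulr0 mul0r addr0.
by exists (y, - x); rewrite /= oppr_eq0 x0 orbT; split=> //; ring.
Qed.

Lemma count_enum (T : finType) (p : pred T) : count p (enum T) = #|p|.
Proof. by rewrite cardE -size_filter /enum_mem filter_predT. Qed.

Lemma char_poly_conj (R : comUnitRingType) n (P Q D : 'M[R]_n) :
  Q *m P = 1%:M -> char_poly (Q *m D *m P) = char_poly D.
Proof.
move=> QP; rewrite /char_poly.
have QP' : map_mx polyC Q *m map_mx polyC P = 1%:M by rewrite -map_mxM QP map_mx1.
have -> : char_poly_mx (Q *m D *m P) =
          map_mx polyC Q *m char_poly_mx D *m map_mx polyC P.
  by rewrite /char_poly_mx mulmxBr mulmxBl !map_mxM mul_mx_scalar -scalemxAl QP' scalemx1.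
by rewrite !det_mulmx mulrC mulrA -det_mulmx (mulmx1C QP') det1 mul1r.
Qed.

Lemma second_of_sorted (R : numDomainType) (s : seq R) c :
  all (fun x => x \is Num.real) s -> (1 < size s)%N -> c \is Num.real ->
  sorted (fun x y => y <= x) s ->
  (nth 0 s 1 = c <-> (1 < count (fun x => (c <= x)%R) s)%N /\
                     (count (fun x => (c < x)%R) s <= 1)%N).
Proof.
case: s => [|a [|b t]] //= /and3P[_ bR _] _ cR /andP[ba bt].
have tb : all (fun x => x <= b) t.
  by apply: (order_path_min _ bt) => x y z yx zy; apply: le_trans zy yx.
have count_le d : b < d -> count (fun x => d <= x) t = 0%N.
  move=> bd; apply/eqP; rewrite -leqn0 leqNgt -has_count; apply/hasPn => x /(allP tb) xb.
  by rewrite lt_geF // (le_lt_trans xb bd).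
have count_lt : count (fun x => b < x) t = 0%N.
  apply/eqP; rewrite -leqn0 leqNgt -has_count; apply/hasPn => x /(allP tb) xb.
  by rewrite le_gtF.
split=> [<-|[two one]].
  by rewrite count_lt ba lexx ltxx /= addn0; case: (b < a).
have [bc|cb|//] := real_ltgtP bR cR.
  by move: two; rewrite (count_le _ bc) addn0 (lt_geF bc) /=; case: (c <= a).
by move: one; rewrite cb (lt_le_trans cb ba).
Qed.

(* Spectral theory of a Hermitian matrix A = P^* D P, with P unitary and D
   real diagonal; [coords u] are the coordinates of u in the eigenbasis. *)
Section HermitianSpectrum.

Variables (n : nat) (A : 'M[algC]_n).
Hypothesis hermA : A \is hermsymmx.

Local Notation P := (spectralmx A).
Local Notation lambda := (spectral_diag A 0).
Local Notation coords u := (@mulmx _ 1 n n u (P ^t*)).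

Lemma spectral_unitary : P *m P ^t* = 1%:M.
Proof. exact/unitarymxP/spectral_unitarymx. Qed.

Lemma spectral_unitaryV : P ^t* *m P = 1%:M.
Proof. exact/mulmx1C/spectral_unitary. Qed.

Lemma spectral_decomposition : A = P ^t* *m diag_mx (spectral_diag A) *m P.
Proof.
rewrite -invmx_unitary ?spectral_unitarymx //.
exact/orthomx_spectralP/hermitian_normalmx.
Qed.

Lemma eigenvalue_real k : lambda k \is Num.real.
Proof. by have /mxOverP := hermitian_spectral_diag_real hermA; apply. Qed.

Lemma coords_neq0 u : u != 0 -> exists k, coords u 0 k != 0.
Proof.
move=> u0; apply: row_neq0P; apply: contra u0 => /eqP z0.
by rewrite -(mulmx1 u) -spectral_unitaryV mulmxA z0 mul0mx.
Qed.

Lemma qform_gap c u : qform A u - c * sqnorm u =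
  \sum_k (lambda k - c) * (coords u 0 k * (coords u 0 k)^*).
Proof.
have -> : qform A u = (coords u *m diag_mx (spectral_diag A) *m (coords u)^t*) 0 0.
  by rewrite /qform {1}spectral_decomposition trmx_mul map_mxM trmxCK !mulmxA.
have -> : sqnorm u = sqnorm (coords u).
  by rewrite /sqnorm trmx_mul map_mxM trmxCK mulmxA -(mulmxA u) spectral_unitaryV mulmx1.
rewrite sqnormE mxE mulr_sumr -sumrB; apply: eq_bigr => k _.
by rewrite mul_mx_diag !mxE; ring.
Qed.

Lemma rayleigh_ge c u : (forall k, coords u 0 k = 0 \/ c <= lambda k) ->
  c * sqnorm u <= qform A u.
Proof.
move=> uc; rewrite -subr_ge0 qform_gap sumr_ge0 // => k _.
by case: (uc k) => [->|ck]; rewrite ?mul0r ?mulr0 // mulr_ge0 ?subr_ge0 ?mul_conjC_ge0.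
Qed.

Lemma rayleigh_gt c u : u != 0 -> (forall k, coords u 0 k = 0 \/ c < lambda k) ->
  c * sqnorm u < qform A u.
Proof.
move=> /coords_neq0 [k zk] uc; rewrite -subr_gt0 qform_gap (@psumr_gt0 _ _ _ k).
- by [].
- move=> l; case: (uc l) => [->|cl]; rewrite ?mul0r ?mulr0 //.
  by rewrite mulr_ge0 ?subr_ge0 ?mul_conjC_ge0 ?ltW.
- case: (uc k) => [z0|ck]; first by rewrite z0 eqxx in zk.
  by rewrite mulr_gt0 ?subr_gt0 ?mul_conjC_gt0.
Qed.

Lemma rayleigh_lt c u : u != 0 -> (forall k, coords u 0 k = 0 \/ lambda k < c) ->
  qform A u < c * sqnorm u.
Proof.
move=> /coords_neq0 [k zk] uc; rewrite -subr_lt0 qform_gap -oppr_gt0 -sumrN.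
rewrite (@psumr_gt0 _ _ _ k).
- by [].
- move=> l; case: (uc l) => [->|lc]; rewrite ?mul0r ?mulr0 ?oppr0 //.
  by rewrite -mulNr opprB mulr_ge0 ?subr_ge0 ?mul_conjC_ge0 ?ltW.
- case: (uc k) => [z0|kc]; first by rewrite z0 eqxx in zk.
  by rewrite -mulNr opprB mulr_gt0 ?subr_gt0 ?mul_conjC_gt0.
Qed.

Definition two_eigenvalues (p : pred algC) : Prop :=
  exists i j, [/\ i != j, p (lambda i) & p (lambda j)].

Lemma eigenvalues_perm : perm_eq (eigenvalues A) [seq lambda i | i <- enum 'I_n].
Proof.
apply: prod_XsubC_eq.
have -> : \prod_(x <- eigenvalues A) ('X - x%:P) = char_poly A.
  rewrite /eigenvalues; case: closed_field_poly_normal => r /= ->.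
  by rewrite (monicP (char_poly_monic A)) scale1r.
rewrite {1}spectral_decomposition char_poly_conj ?spectral_unitaryV //.
rewrite char_poly_trig ?diag_mx_is_trig // big_map big_enum /=.
by apply: eq_bigr => i _; rewrite !mxE eqxx mulr1n.
Qed.

Lemma sum_zero_vector_of_two_eigenvalues p : two_eigenvalues p ->
  exists u, [/\ u != 0, sumv u = 0 & forall k, coords u 0 k = 0 \/ p (lambda k)].
Proof.
move=> [i [j [ij pi pj]]].
have [[a b] [ab0 sab]] := nontrivial_kernel2 (sumv (row i P)) (sumv (row j P)).
pose u := a *: row i P + b *: row j P.
have zk k : coords u 0 k = a * (k == i)%:R + b * (k == j)%:R.
  by rewrite mulmxDl -!scalemxAl -!row_mul spectral_unitary !row1 !mxE.
exists u; split.
- apply: contraTneq ab0 => u0; have := zk i; have := zk j.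
  rewrite u0 mul0mx !mxE !eqxx eq_sym (negbTE ij) /= !mulr0 !mulr1 addr0 add0r.
  by move=> <- <-; rewrite eqxx.
- by rewrite sumvZD.
- move=> k; have [->|ki] := eqVneq k i; first by right.
  have [->|kj] := eqVneq k j; first by right.
  by left; rewrite zk (negbTE ki) (negbTE kj) !mulr0 addr0.
Qed.

Lemma second_eigenvalue_eq c : (1 < n)%N -> c \is Num.real ->
  nth 0 (sort (fun x y : algC => y <= x) (eigenvalues A)) 1 = c <->
  two_eigenvalues (fun l => c <= l) /\ ~ two_eigenvalues (fun l => c < l).
Proof.
move=> n1 cR.
have ps : perm_eq (sort (fun x y : algC => y <= x) (eigenvalues A))
                  [seq lambda i | i <- enum 'I_n].
  by apply: perm_trans eigenvalues_perm; rewrite perm_sort.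
have allR : all (fun x => x \is Num.real) [seq lambda i | i <- enum 'I_n].
  by rewrite all_map; apply/allP => i _; exact: eigenvalue_real.
have two_card p : (1 < count p [seq lambda i | i <- enum 'I_n])%N <->
                  two_eigenvalues p.
  rewrite count_map count_enum.
  by split=> [/card_gt1P[i [j [pi pj ij]]]|[i [j [ij pi pj]]]];
    [exists i, j | apply/card_gt1P; exists i, j].
have sorted_spec : sorted (fun x y : algC => y <= x)
                          (sort (fun x y : algC => y <= x) (eigenvalues A)).
  apply: (@sort_sorted_in _ (fun x : algC => x \is Num.real)).
    by move=> x y xR yR; rewrite real_leVge.
  by rewrite (perm_all _ eigenvalues_perm).
have size_spec : (1 < size (sort (fun x y : algC => (y <= x)%R) (eigenvalues A)))%N.
  by rewrite (perm_size ps) size_map size_enum_ord.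
rewrite second_of_sorted ?(perm_all _ ps) // !(permP ps) -!two_card.
by split=> -[two one]; split=> //;
  [apply/negP; rewrite -leqNgt | rewrite leqNgt; apply/negP].
Qed.

Lemma two_eigenvalues_of_plane c x y : c \is Num.real ->
  (forall a b, a *: x + b *: y = 0 -> a = 0 /\ b = 0) ->
  (forall a b, c * sqnorm (a *: x + b *: y) <= qform A (a *: x + b *: y)) ->
  two_eigenvalues (fun l => c <= l).
Proof.
move=> cR indep lower.
have [|none] := boolP [exists i, exists j, [&& i != j, c <= lambda i & c <= lambda j]].
  by case/existsP=> i /existsP[j /and3P[]]; exists i, j.
suff [a [b [ab0 below]]] : exists a b, ((a != 0) || (b != 0)) /\
    forall k, coords (a *: x + b *: y) 0 k = 0 \/ lambda k < c.
  have w0 : a *: x + b *: y != 0.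
    by apply/eqP => /indep[a0 b0]; move: ab0; rewrite a0 b0 eqxx.
  by have := lt_le_trans (rayleigh_lt w0 below) (lower a b); rewrite ltxx.
have [k ck|none_ge] := pickP (fun k => c <= lambda k); last first.
  exists 1, 0; split; first by rewrite oner_eq0.
  by move=> l; right; rewrite real_ltNge ?eigenvalue_real ?none_ge.
have [[a b] [ab0 abk]] := nontrivial_kernel2 (coords x 0 k) (coords y 0 k).
exists a, b; split=> // l; have [->|lk] := eqVneq l k.
  by left; rewrite mulmxDl -!scalemxAl !mxE in abk *.
right; rewrite real_ltNge ?eigenvalue_real //; apply: contra none => cl.
by apply/existsP; exists l; apply/existsP; exists k; rewrite lk cl ck.
Qed.

End HermitianSpectrum.

Section SignlessLaplacian.

Variables (n : nat) (f : rel 'I_n).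
Hypothesis fsym : symmetric f.

Local Notation Q := (signless_laplacian f).

Lemma signless_laplacian_herm : Q \is hermsymmx.
Proof.
apply: realsym_hermsym; last first.
  by apply/mxOverP => i j; rewrite !mxE rpredD ?rpredM ?realn.
apply/is_hermitianmxP; rewrite expr0 scale1r; apply/matrixP => i j.
by rewrite !mxE /= fsym; case: (eqVneq i j) => [->|ij]; rewrite ?mul0r.
Qed.

Lemma degreeE i : (degree f i)%:R = \sum_j ((f i j)%:R : algC).
Proof.
rewrite /degree -sum1_card natr_sum big_mkcond /=; apply: eq_bigr => j _.
by rewrite inE; case: (f i j).
Qed.

(* 2 u Q u^* is the sum of |u_i + u_j|^2 over the ordered pairs (i, j) with
   f i j: this is why Q is positive semidefinite. *)
Lemma qform_edges u : 2 * qform Q u =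
  \sum_i \sum_j (f i j)%:R * ((u 0 i + u 0 j) * (u 0 i + u 0 j)^*).
Proof.
have qadj : qform (adj_mx f) u =
    \sum_i \sum_j (f i j)%:R * (u 0 i * (u 0 j)^*).
  by rewrite qformE; apply: eq_bigr => i _; apply: eq_bigr => j _; rewrite mxE; ring.
have qdeg : qform (deg_mx f) u =
    \sum_i \sum_j (f i j)%:R * (u 0 i * (u 0 i)^*).
  rewrite qformE; apply: eq_bigr => i _; rewrite (bigD1 i) //= big1 => [|j ji].
    rewrite !mxE eqxx mul1r addr0 [u 0 i * _]mulrC -mulrA degreeE mulr_suml.
    by apply: eq_bigr => j _; rewrite mulrA.
  by rewrite !mxE eq_sym (negbTE ji) mul0r mulr0 mul0r.
pose half i j := (f i j)%:R * (u 0 i * (u 0 j)^* + u 0 i * (u 0 i)^*) : algC.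
have -> : qform Q u = \sum_i \sum_j half i j.
  rewrite /signless_laplacian qformD qadj qdeg -big_split /=.
  by apply: eq_bigr => i _; rewrite -big_split /=; apply: eq_bigr => j _; rewrite -mulrDr.
rewrite mulr_natl mulr2n {2}exchange_big -big_split /=.
apply: eq_bigr => i _; rewrite -big_split /=; apply: eq_bigr => j _.
by rewrite /half fsym rmorphD /=; ring.
Qed.

Lemma edge_term_ge0 (u : 'rV[algC]_n) i j :
  0 <= (f i j)%:R * ((u 0 i + u 0 j) * (u 0 i + u 0 j)^*).
Proof. by rewrite mulr_ge0 ?ler0n ?mul_conjC_ge0. Qed.

Lemma qform_signless_ge0 u : 0 <= qform Q u.
Proof.
rewrite -(pmulr_rge0 _ (ltr0n _ 2)) qform_edges.
by apply: sumr_ge0 => i _; apply: sumr_ge0 => j _; apply: edge_term_ge0.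
Qed.

(* u is alternating when u_j = - u_i along every edge: exactly the vectors
   in the kernel of the quadratic form of Q. *)
Definition alternating (u : 'rV[algC]_n) : Prop :=
  forall i j, f i j -> u 0 i + u 0 j = 0.

Lemma qform_eq0_alternating u : qform Q u = 0 -> alternating u.
Proof.
move=> q0 i j fij; have := qform_edges u; rewrite q0 mulr0 => /esym sum0.
have row_i := psumr_eq0P (fun k _ => sumr_ge0 _ (fun l _ => edge_term_ge0 u k l))
                         sum0 (i := i) isT.
have /eqP := psumr_eq0P (fun l _ => edge_term_ge0 u i l) row_i (i := j) isT.
by rewrite fij mul1r mul_conjC_eq0 => /eqP.
Qed.

Lemma qform_add_alternating x y a b : alternating y ->
  qform Q (a *: x + b *: y) = a * a^* * qform Q x.
Proof.
move=> alt_y; apply: (@mulfI _ 2); first by rewrite pnatr_eq0.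
rewrite mulrCA !qform_edges.
rewrite mulr_sumr; apply: eq_bigr => i _; rewrite mulr_sumr; apply: eq_bigr => j _.
rewrite !mxE; case fij: (f i j); last by rewrite !mul0r mulr0.
have -> : a * x 0 i + b * y 0 i + (a * x 0 j + b * y 0 j) = a * (x 0 i + x 0 j).
  transitivity (a * (x 0 i + x 0 j) + b * (y 0 i + y 0 j)); first by ring.
  by rewrite (alt_y _ _ fij) mulr0 addr0.
by rewrite rmorphM /=; ring.
Qed.

Definition indicator (S : {set 'I_n}) : 'rV[algC]_n := \row_i (i \in S)%:R.

Lemma sumv_indicator (S : {set 'I_n}) : sumv (indicator S) = #|S|%:R.
Proof.
rewrite /sumv -sum1_card natr_sum [RHS]big_mkcond /=; apply: eq_bigr => i _.
by rewrite mxE; case: (i \in S).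
Qed.

Lemma qform_indicator (S : {set 'I_n}) : closed f S ->
  qform Q (indicator S) = (2 * \sum_(i in S) degree f i)%:R.
Proof.
move=> clS; apply: (@mulfI _ 2); first by rewrite pnatr_eq0.
rewrite qform_edges -natrM mulnA.
rewrite natrM natr_sum mulr_sumr [RHS]big_mkcond /=; apply: eq_bigr => i _.
case iS: (i \in S); last first.
  apply: big1 => j _; rewrite !mxE iS; case fij: (f i j); last by rewrite !mul0r.
  by rewrite -(clS _ _ fij) iS add0r mul0r mulr0.
rewrite degreeE mulr_sumr; apply: eq_bigr => j _; rewrite !mxE iS.
case fij: (f i j); last by rewrite !mul0r mulr0.
by rewrite -(clS _ _ fij) iS /= rmorphD rmorph1; ring.
Qed.

(* A bipartite union S of components has total degree at most |S|^2 / 2,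
   since each side has neighbours only on the other side (AM-GM). *)
Lemma bipartite_degree_bound (S : {set 'I_n}) (c : 'I_n -> bool) :
  closed f S -> bipartite_on f S c -> (2 * \sum_(i in S) degree f i <= #|S| ^ 2)%N.
Proof.
move=> clS bipS; set p := #|[set x in S | c x]|; set q := #|[set x in S | ~~ c x]|.
have cardS : #|S| = (p + q)%N.
  rewrite -(cardsID [set x | c x] S) /p /q.
  by congr (_ + _); apply: eq_card => x; rewrite !inE andbC.
have nbr_other i j : i \in S -> f i j -> [/\ j \in S & c j = ~~ c i].
  move=> iS fij; have jS : j \in S by rewrite -(clS _ _ fij).
  by split=> //; have := bipS _ _ iS jS fij; case: (c i); case: (c j).
have deg_side i : i \in S -> (degree f i <= if c i then q else p)%N.
  move=> iS; rewrite /degree /p /q.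
  by case ci: (c i); apply: subset_leq_card; apply/subsetP => j;
    rewrite !inE => /(nbr_other _ _ iS) [-> ->]; rewrite ci.
have sum_deg : (\sum_(i in S) degree f i <= p * q + q * p)%N.
  apply: (@leq_trans (\sum_(i in S) (if c i then q else p))); first exact: leq_sum.
  rewrite (bigID c) /=.
  rewrite (eq_bigr (fun _ => q)) => [|i /andP[_ ->] //].
  rewrite [X in (_ + X)%N](eq_bigr (fun _ => p)) => [|i /andP[_ /negbTE ->] //].
  by rewrite !sum_nat_cond_const.
rewrite cardS (leq_trans _ (nat_AGM2 p q).1) //.
rewrite (mulnC q p) addnn -mul2n in sum_deg.
by rewrite -[4%N]/(2 * 2)%N -mulnA leq_mul2l sum_deg orbT.
Qed.

End SignlessLaplacian.

Section AlternatingVectors.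

Variables (n : nat) (f : rel 'I_n).
Hypothesis fsym : symmetric f.

Lemma component_self v : v \in component f v.
Proof. by rewrite inE connect0. Qed.

Lemma component_closed v : closed f (component f v).
Proof.
move=> x y fxy; rewrite !inE; apply/idP/idP => vx.
  exact: connect_trans vx (connect1 fxy).
by rewrite fsym in fxy; exact: connect_trans vx (connect1 fxy).
Qed.

Lemma alternating_edge w x y : alternating f w -> f x y -> w 0 y = - w 0 x.
Proof. by move=> alt fxy; apply/eqP; rewrite -addr_eq0 addrC alt. Qed.

Lemma alternatingZD a b x y : alternating f x -> alternating f y ->
  alternating f (a *: x + b *: y).
Proof.
move=> altx alty i j fij; rewrite !mxE.
transitivity (a * (x 0 i + x 0 j) + b * (y 0 i + y 0 j)); first by ring.
by rewrite altx // alty // !mulr0 addr0.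
Qed.

Lemma alternating_connect w a b : alternating f w -> connect f a b ->
  (w 0 b == w 0 a) || (w 0 b == - w 0 a).
Proof.
move=> alt ab; pose p := [pred x | (w 0 x == w 0 a) || (w 0 x == - w 0 a)].
have clp : closed f p.
  move=> x y fxy; rewrite !inE (alternating_edge alt fxy).
  by rewrite eqr_oppLR eqr_opp orbC.
by have := closed_connect clp ab; rewrite !inE eqxx => <-.
Qed.

Lemma alternating_bipartite w a : alternating f w -> w 0 a != 0 ->
  bipartite_on f (component f a) (fun x => w 0 x == w 0 a).
Proof.
move=> alt wa x y; rewrite inE => ax _ fxy; rewrite (alternating_edge alt fxy).
have aa : (- w 0 a == w 0 a) = false by rewrite eqNr (negbTE wa).
by case/orP: (alternating_connect alt ax) => /eqP ->; rewrite ?opprK eqxx aa.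
Qed.

Definition signed_indicator (C : {set 'I_n}) (c : 'I_n -> bool) : 'rV[algC]_n :=
  \row_x (if x \in C then (if c x then 1 else -1) else 0).

Lemma signed_indicator_neq0 (C : {set 'I_n}) c x :
  x \in C -> signed_indicator C c 0 x != 0.
Proof.
by move=> xC; rewrite mxE xC; case: (c x); rewrite ?oppr_eq0 oner_eq0.
Qed.

Lemma sumv_signed_indicator (C : {set 'I_n}) c : sumv (signed_indicator C c) =
  #|[set x in C | c x]|%:R - #|[set x in C | ~~ c x]|%:R.
Proof.
rewrite /sumv (bigID (mem C)) /= [X in _ + X]big1 ?addr0 => [|x /negbTE xC]; last first.
  by rewrite mxE xC.
rewrite (bigID c) /=.
rewrite (eq_bigr (fun=> 1)) => [|x /andP[xC cx]]; last by rewrite mxE xC cx.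
rewrite [X in _ + X](eq_bigr (fun=> -1)) => [|x /andP[xC /negbTE cx]]; last first.
  by rewrite mxE xC cx.
have sum_const (p : pred 'I_n) (a : algC) :
    \sum_(i in C | p i) a = a *+ #|[set i in C | p i]|.
  by rewrite -sumr_const; apply: eq_bigl => i; rewrite inE.
by rewrite !sum_const mulNrn.
Qed.

Lemma alternating_signed_indicator (C : {set 'I_n}) c :
  closed f C -> bipartite_on f C c -> alternating f (signed_indicator C c).
Proof.
move=> clC bipC x y fxy; rewrite !mxE -(clC _ _ fxy).
case xC: (x \in C); last by rewrite addr0.
have := bipC _ _ xC _ fxy; rewrite -(clC _ _ fxy) => /(_ xC).
by case: (c x); case: (c y) => // _; rewrite ?subrr ?addNr.
Qed.

Lemma alternating_component_sum w a : alternating f w -> w 0 a != 0 ->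
  \sum_(x in component f a) w 0 x =
  w 0 a * sumv (signed_indicator (component f a) (fun x => w 0 x == w 0 a)).
Proof.
move=> alt wa; rewrite /sumv mulr_sumr [RHS](bigID (mem (component f a))) /=.
rewrite [X in _ = _ + X]big1 ?addr0 => [|x /negbTE xC]; last by rewrite mxE xC mulr0.
apply: eq_bigr => x ax; rewrite mxE ax.
have := ax; rewrite inE => /(alternating_connect alt) /orP[] /eqP ->.
  by rewrite eqxx mulr1.
by rewrite eqNr (negbTE wa) mulrN1.
Qed.

Lemma bipartite_components_of_alternating w :
  w != 0 -> alternating f w -> sumv w = 0 ->
  (exists v, balanced_bipartite_component f v) \/ has_two_bipartite_components f.
Proof.
move=> w0 alt sw; have [a wa] := row_neq0P w0.
set C := component f a; set c := fun x => w 0 x == w 0 a.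
have bipC : bipartite_on f C c := alternating_bipartite alt wa.
have [bal|unbal] := eqVneq #|[set x in C | c x]| #|[set x in C | ~~ c x]|.
  by left; exists a, c.
right; have sumC : \sum_(x in C) w 0 x != 0.
  rewrite alternating_component_sum // sumv_signed_indicator.
  by rewrite mulf_neq0 // subr_eq0 eqr_nat.
have [b /andP[bC wb]] : exists b, (b \notin C) && (w 0 b != 0).
  apply/existsP; apply: contraNT sumC; rewrite negb_exists => /forallP out0.
  apply/eqP; rewrite -[RHS]sw /sumv [RHS](bigID (mem C)) /=.
  rewrite [X in _ = _ + X]big1 ?addr0 // => x xC.
  by have := out0 x; rewrite xC /= negbK => /eqP.
exists a, b; split; first by rewrite inE in bC.
by split; [exists c | exists (fun x => w 0 x == w 0 b)]; exact: alternating_bipartite.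
Qed.

Lemma alternating_of_balanced v : balanced_bipartite_component f v ->
  exists w, [/\ w != 0, alternating f w & sumv w = 0].
Proof.
move=> [c [bipC bal]]; exists (signed_indicator (component f v) c); split.
- apply: contraTneq (signed_indicator_neq0 c (component_self v)) => ->.
  by rewrite mxE eqxx.
- exact: alternating_signed_indicator (component_closed v) bipC.
- by rewrite sumv_signed_indicator bal subrr.
Qed.

Lemma alternating_of_two_components : has_two_bipartite_components f ->
  exists w, [/\ w != 0, alternating f w & sumv w = 0].
Proof.
move=> [u [v [uv [[cu bipu] [cv bipv]]]]].
set su := signed_indicator (component f u) cu.
set sv := signed_indicator (component f v) cv.
have alt_su : alternating f su := alternating_signed_indicator (component_closed u) bipu.
have alt_sv : alternating f sv := alternating_signed_indicator (component_closed v) bipv.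
have su_u : su 0 u != 0 := signed_indicator_neq0 cu (component_self u).
have sv_v : sv 0 v != 0 := signed_indicator_neq0 cv (component_self v).
have [su0|su_ne0] := eqVneq (sumv su) 0.
  by exists su; split=> //; apply: contraTneq su_u => ->; rewrite mxE eqxx.
exists (sumv sv *: su + (- sumv su) *: sv); split.
- apply: contraTneq sv_v => w0.
  have := congr1 (fun w : 'rV_n => w 0 v) w0; rewrite !mxE inE (negbTE uv) mulr0 add0r.
  by move/eqP; rewrite mulf_eq0 oppr_eq0 (negbTE su_ne0) /= => /eqP ->; rewrite eqxx.
- exact: alternatingZD.
- by rewrite sumvZD; ring.
Qed.

Lemma alternating_vector_iff :
  (exists w, [/\ w != 0, alternating f w & sumv w = 0]) <->
  (exists v, balanced_bipartite_component f v) \/ has_two_bipartite_components f.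
Proof.
split=> [[w [w0 alt sw]]|[[v bal]|two]].
- exact: bipartite_components_of_alternating w0 alt sw.
- exact: alternating_of_balanced bal.
- exact: alternating_of_two_components two.
Qed.

End AlternatingVectors.

Section Complement.

Variables (n : nat) (e : rel 'I_n).
Hypothesis simple_e : simple_graph e.

Local Notation ce := (compl_graph e).

Lemma compl_symmetric : symmetric ce.
Proof. by move=> i j; rewrite /compl_graph eq_sym (proj2 simple_e). Qed.

Lemma degree_add_compl i : (degree e i + degree ce i)%N = n.-1.
Proof.
rewrite /degree -[in RHS](card_ord n) -(cardsC1 i).
rewrite -(cardsID [set j | e i j] [set~ i]); congr (_ + _)%N; apply: eq_card => j.
  rewrite !inE; case eij: (e i j); rewrite ?andbT ?andbF //.
  by apply/esym/eqP => ji; rewrite ji (proj1 simple_e) in eij.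
by rewrite !inE /compl_graph eq_sym andbC.
Qed.

Lemma signless_laplacian_add_compl : (0 < n)%N ->
  signless_laplacian e + signless_laplacian ce = const_mx 1 + (n%:R - 2)%:M.
Proof.
move=> n0; apply/matrixP => i j; rewrite !mxE addrACA -mulrDr -!natrD.
rewrite degree_add_compl; case: (eqVneq i j) => [<-|ij] /=.
  by rewrite (proj1 simple_e) /compl_graph eqxx /= -subn1 natrB //; ring.
by rewrite /compl_graph ij /= mul0r mulr0n !addr0; case: (e i j).
Qed.

Lemma qform_complement u : (0 < n)%N ->
  qform (signless_laplacian e) u =
  sumv u * (sumv u)^* + (n%:R - 2) * sqnorm u - qform (signless_laplacian ce) u.
Proof.
move=> n0; rewrite -[signless_laplacian e]addr0 -(subrr (signless_laplacian ce)).
by rewrite addrA signless_laplacian_add_compl // qformB !qformD qform_const1 qform_scalar.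
Qed.

Lemma signless_laplacian_herm_simple : signless_laplacian e \is hermsymmx.
Proof. exact/signless_laplacian_herm/(proj2 simple_e). Qed.

Lemma qform_sum_zero u : (0 < n)%N -> sumv u = 0 ->
  qform (signless_laplacian e) u =
  (n%:R - 2) * sqnorm u - qform (signless_laplacian ce) u.
Proof. by move=> n0 su; rewrite qform_complement // su mul0r add0r. Qed.

Lemma plane_lower_bound (S : {set 'I_n}) c w s t : (0 < n)%N ->
  closed ce S -> bipartite_on ce S c -> alternating ce w -> sumv w = 0 ->
  (n%:R - 2) * sqnorm (s *: indicator S + t *: w) <=
  qform (signless_laplacian e) (s *: indicator S + t *: w).
Proof.
move=> n0 clS bipS alt sw; have ce_sym := compl_symmetric.
rewrite qform_complement // addrAC lerDr subr_ge0 sumvZD sw mulr0 addr0 sumv_indicator.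
rewrite qform_add_alternating ?qform_indicator //.
have -> : s * #|S|%:R * (s * #|S|%:R)^* = s * s^* * (#|S| ^ 2)%:R.
  by rewrite rmorphM /= conjC_nat natrX; ring.
by rewrite ler_wpM2l ?mul_conjC_ge0 // ler_nat (bipartite_degree_bound clS bipS).
Qed.

Lemma no_two_eigenvalues_above : (0 < n)%N ->
  ~ two_eigenvalues (signless_laplacian e) (fun l => n%:R - 2 < l).
Proof.
move=> n0 /sum_zero_vector_of_two_eigenvalues [u [u0 su supp]].
have := rayleigh_gt signless_laplacian_herm_simple u0 supp.
have le : qform (signless_laplacian e) u <= (n%:R - 2) * sqnorm u.
  by rewrite qform_sum_zero // gerDl oppr_le0 (qform_signless_ge0 compl_symmetric).
by move=> /lt_le_trans/(_ le); rewrite ltxx.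
Qed.

Lemma two_eigenvalues_at_least_iff : (0 < n)%N ->
  two_eigenvalues (signless_laplacian e) (fun l => n%:R - 2 <= l) <->
  exists w, [/\ w != 0, alternating ce w & sumv w = 0].
Proof.
move=> n0; split=> [/sum_zero_vector_of_two_eigenvalues [u [u0 su supp]]|].
  exists u; split=> //; apply: qform_eq0_alternating; first exact: compl_symmetric.
  have := rayleigh_ge signless_laplacian_herm_simple supp.
  rewrite qform_sum_zero // lerDl oppr_ge0 => q_le0.
  by apply/eqP; rewrite eq_le q_le0 (qform_signless_ge0 compl_symmetric).
move=> [w [w0 alt sw]]; have [a wa] := row_neq0P w0.
apply: (two_eigenvalues_of_plane signless_laplacian_herm_simple
          (x := indicator (component ce a)) (y := w)).
- by rewrite rpredB ?realn.
- move=> s t st0; have := congr1 (@sumv n) st0.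
  rewrite sumvZD sw mulr0 addr0 sumv_indicator /sumv big1 => [|i _]; last by rewrite mxE.
  move/eqP; rewrite mulf_eq0 pnatr_eq0 cards_eq0 => /orP[/eqP s0|].
    move: st0; rewrite s0 scale0r add0r => /eqP.
    by rewrite scaler_eq0 (negbTE w0) orbF => /eqP.
  by move/eqP/setP/(_ a); rewrite in_set0 component_self.
- move=> s t; have bip := alternating_bipartite alt wa.
  exact: (plane_lower_bound s t n0 (component_closed compl_symmetric a) bip alt sw).
Qed.

End Complement.

Local Close Scope sesquilinear_scope.
Local Close Scope ring_scope.

Theorem theorem1 (n : nat) (e : rel 'I_n) :
  simple_graph e -> (2 <= n)%N ->
  (qeig e 2 = (n%:R - 2)%R :> algC <->
   (exists v, balanced_bipartite_component (compl_graph e) v) \/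
   has_two_bipartite_components (compl_graph e)).
Proof.
move=> simple_e n2; have n0 : (0 < n)%N := ltnW n2.
have real_c : (n%:R - 2 : algC)%R \is Num.real by rewrite rpredB ?realn.
have hermQ := signless_laplacian_herm_simple simple_e.
apply: iff_trans (second_eigenvalue_eq hermQ n2 real_c) _.
apply: iff_trans _ (alternating_vector_iff (compl_symmetric simple_e)).
apply: iff_trans _ (two_eigenvalues_at_least_iff simple_e n0).
by split=> [[]|two] //; split=> //; exact: no_two_eigenvalues_above.
Qed.
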